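(* Let $g>0$, $c>0$ be constants and let $\alpha_1,\alpha_2,\alpha_3\in\mathbb{R}$, $\alpha_4=\alpha_2$. Consider the state $u=(h,hv,hw,hp)$ with $h>0$ together with a time-independent bathymetry value $b$ (treated as an extra component of the state, so $b_i$ is attached to cell $i$), the physical flux $f(u)=(hv,\ hv^2+\tfrac12gh^2+hp,\ hwv,\ hpv)$, and the nonconservative terms $H_1=(0,gh,0,0)^T$, $g_1=b$; $H_2=(0,2p,0,0)^T$, $g_2=b$; $H_3=(0,0,0,c^2h)^T$, $g_3=v$; $H_4=(0,0,0,-2c^2v)^T$, $g_4=b$. Consider the semi-discretization $$\partial_tu_i+\frac{f^{\mathrm{num}}_{i+1/2}-f^{\mathrm{num}}_{i-1/2}}{\Delta x}+\sum_{k=1}^4\Big(\alpha_k\frac{H^{\mathrm{num}}_{k,i+1/2}[\![g_k]\!]_{i+1/2}+H^{\mathrm{num}}_{k,i-1/2}[\![g_k]\!]_{i-1/2}}{2\Delta x}+(1-\alpha_k)H_k(u_i)\frac{[\![g_k]\!]_{i+1/2}+[\![g_k]\!]_{i-1/2}}{2\Delta x}\Big)=0,$$ with $H^{\mathrm{num}}_1=(0,gh^{\mathrm{num}},0,0)^T$, $H^{\mathrm{num}}_2=(0,2p^{\mathrm{num}},0,0)^T$, $H^{\mathrm{num}}_3=(0,0,0,c^2h^{\mathrm{num}})^T$, $H^{\mathrm{num}}_4=(0,0,0,-2c^2v^{\mathrm{num}})^T$ and $f^{\mathrm{num}}=(f^h,f^{hv},f^{hw},f^{hp})$ given by $$f^h=\alpha_1\{\{h\}\}\{\{v\}\}+(1-\alpha_1)\{\{hv\}\},$$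 $$f^{hv}=f^h\{\{v\}\}+(1-\alpha_1)g\{\{h\}\}^2+(\alpha_1-\tfrac12)g\{\{h^2\}\}+\alpha_3\{\{p\}\}\{\{h\}\}+(1-\alpha_3)\{\{ph\}\},$$ $$f^{hw}=f^h\{\{w\}\},\quad f^{hp}=f^h\{\{p\}\},\quad h^{\mathrm{num}}=\{\{h\}\},\quad v^{\mathrm{num}}=\{\{v\}\},\quad p^{\mathrm{num}}=\{\{p\}\}.$$ Then the semi-discretization conserves the total energy $U=\tfrac12hv^2+\tfrac12hw^2+\tfrac{1}{2c^2}hp^2+\tfrac12gh^2+ghb$, i.e., it is entropy-conservative for the pair $(U,F)$ with $F=Uv+\tfrac12gh^2v+hpv$.
   Context: For a quantity $a$ and neighboring states: $\{\{a\}\}=\tfrac12(a_-+a_+)$, $[\![a]\!]=a_+-a_-$; subscripts $i+1/2$ mean evaluation at $(u_-,u_+)=(u_i,u_{i+1})$ (including $b_i,b_{i+1}$). Entropy variables are $\omega=\big(-\tfrac{v^2}{2}-\tfrac{w^2}{2}-\tfrac{p^2}{2c^2}+gh+gb,\ v,\ w,\ \tfrac{p}{c^2}\big)$ (the derivative of $U$ with respect to $(h,hv,hw,hp)$). Entropy-conservative means: there exists $F^{\mathrm{num}}$ with $F^{\mathrm{num}}(u,u)=F(u)$ such that for all grid states and all $i$, $\omega(u_i)\cdot\partial_tu_i=-\frac{1}{\Delta x}(F^{\mathrm{num}}(u_i,u_{i+1})-F^{\mathrm{num}}(u_{i-1},u_i))$. *)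

From Stdlib Require Import Reals ZArith.
Open Scope R_scope.

(* Extended cell state in primitive variables (h, v, w, p) plus the
   bathymetry value b attached to the cell. The conservative state is
   u = (h, h v, h w, h p); admissible states have h > 0. *)
Record st := mkSt { sh : R; sv : R; sw : R; sp : R; sb : R }.

Record vec4 := mkV { v1 : R; v2 : R; v3 : R; v4 : R }.

Definition vadd (x y : vec4) : vec4 :=
  mkV (v1 x + v1 y) (v2 x + v2 y) (v3 x + v3 y) (v4 x + v4 y).
Definition vsub (x y : vec4) : vec4 :=
  mkV (v1 x - v1 y) (v2 x - v2 y) (v3 x - v3 y) (v4 x - v4 y).
Definition vscale (a : R) (x : vec4) : vec4 :=
  mkV (a * v1 x) (a * v2 x) (a * v3 x) (a * v4 x).
Definition vdot (x y : vec4) : R :=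
  v1 x * v1 y + v2 x * v2 y + v3 x * v3 y + v4 x * v4 y.

Definition avg (am ap : R) : R := (am + ap) / 2.
Definition jump (am ap : R) : R := ap - am.

Definition fphys (g : R) (s : st) : vec4 :=
  mkV (sh s * sv s)
      (sh s * sv s ^ 2 + / 2 * g * sh s ^ 2 + sh s * sp s)
      (sh s * sw s * sv s)
      (sh s * sp s * sv s).

Definition H1 (g : R) (s : st) : vec4 := mkV 0 (g * sh s) 0 0.
Definition H2 (s : st) : vec4 := mkV 0 (2 * sp s) 0 0.
Definition H3 (c : R) (s : st) : vec4 := mkV 0 0 0 (c ^ 2 * sh s).
Definition H4 (c : R) (s : st) : vec4 := mkV 0 0 0 (- 2 * c ^ 2 * sv s).

Definition H1num (g : R) (sm sp' : st) : vec4 := mkV 0 (g * avg (sh sm) (sh sp')) 0 0.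
Definition H2num (sm sp' : st) : vec4 := mkV 0 (2 * avg (sp sm) (sp sp')) 0 0.
Definition H3num (c : R) (sm sp' : st) : vec4 :=
  mkV 0 0 0 (c ^ 2 * avg (sh sm) (sh sp')).
Definition H4num (c : R) (sm sp' : st) : vec4 :=
  mkV 0 0 0 (- 2 * c ^ 2 * avg (sv sm) (sv sp')).

Definition jg1 (sm sp' : st) : R := jump (sb sm) (sb sp').
Definition jg2 (sm sp' : st) : R := jump (sb sm) (sb sp').
Definition jg3 (sm sp' : st) : R := jump (sv sm) (sv sp').
Definition jg4 (sm sp' : st) : R := jump (sb sm) (sb sp').

Definition fnum_h (a1 : R) (sm sp' : st) : R :=
  a1 * avg (sh sm) (sh sp') * avg (sv sm) (sv sp')
  + (1 - a1) * avg (sh sm * sv sm) (sh sp' * sv sp').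

Definition fnum (g a1 a3 : R) (sm sp' : st) : vec4 :=
  let fh := fnum_h a1 sm sp' in
  mkV fh
      (fh * avg (sv sm) (sv sp')
       + (1 - a1) * g * avg (sh sm) (sh sp') ^ 2
       + (a1 - / 2) * g * avg (sh sm ^ 2) (sh sp' ^ 2)
       + a3 * avg (sp sm) (sp sp') * avg (sh sm) (sh sp')
       + (1 - a3) * avg (sp sm * sh sm) (sp sp' * sh sp'))
      (fh * avg (sw sm) (sw sp'))
      (fh * avg (sp sm) (sp sp')).

Definition ncterm (ak dx : R) (Hnum : st -> st -> vec4) (Hi : vec4)
  (jg : st -> st -> R) (um ui up : st) : vec4 :=
  vadd (vscale (ak / (2 * dx))
          (vadd (vscale (jg ui up) (Hnum ui up)) (vscale (jg um ui) (Hnum um ui))))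
       (vscale ((1 - ak) * (jg ui up + jg um ui) / (2 * dx)) Hi).

(* time derivative d/dt u_i = d/dt (h, hv, hw, hp)_i given by the
   semi-discretization, with alpha_4 = alpha_2 *)
Definition dtu (g c a1 a2 a3 dx : R) (um ui up : st) : vec4 :=
  let a4 := a2 in
  vscale (-1)
    (vadd (vscale (/ dx) (vsub (fnum g a1 a3 ui up) (fnum g a1 a3 um ui)))
      (vadd (ncterm a1 dx (H1num g) (H1 g ui) jg1 um ui up)
        (vadd (ncterm a2 dx H2num (H2 ui) jg2 um ui up)
          (vadd (ncterm a3 dx (H3num c) (H3 c ui) jg3 um ui up)
                (ncterm a4 dx (H4num c) (H4 c ui) jg4 um ui up))))).

Definition Uent (g c : R) (s : st) : R :=
  / 2 * sh s * sv s ^ 2 + / 2 * sh s * sw s ^ 2 + / (2 * c ^ 2) * sh s * sp s ^ 2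
  + / 2 * g * sh s ^ 2 + g * sh s * sb s.

Definition Fent (g c : R) (s : st) : R :=
  Uent g c s * sv s + / 2 * g * sh s ^ 2 * sv s + sh s * sp s * sv s.

(* entropy variables omega = dU/d(h, hv, hw, hp) *)
Definition omega (g c : R) (s : st) : vec4 :=
  mkV (- sv s ^ 2 / 2 - sw s ^ 2 / 2 - sp s ^ 2 / (2 * c ^ 2) + g * sh s + g * sb s)
      (sv s) (sw s) (sp s / c ^ 2).

(* Split the semi-discretization into contributions of the interfaces: the
   interface between cells l and r pushes a fluctuation D_l(l, r) into the left
   cell and D_r(l, r) into the right one.  With the entropy potential
   psi := F - omega . f, the whole scheme is entropy conservative as soon as
   omega(l) . D_l(l, r) + omega(r) . D_r(l, r) = psi(r) - psi(l)
   (Tadmor's condition with nonconservative products), which is a polynomial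
   identity in the two states for every choice of the weights alpha_k.  The
   numerical entropy flux is then omega(l) . D_l(l, r) + psi(l); it is
   consistent because f^num(u, u) = f(u) and all jumps vanish. *)
From Stdlib Require Import Reals ZArith Lra.
Open Scope R_scope.

Lemma vdot_add (o x y : vec4) : vdot o (vadd x y) = vdot o x + vdot o y.
Proof. destruct o, x, y; unfold vdot, vadd; simpl; ring. Qed.

Lemma vdot_scale (o : vec4) (a : R) (x : vec4) : vdot o (vscale a x) = a * vdot o x.
Proof. destruct o, x; unfold vdot, vscale; simpl; ring. Qed.

Lemma vdot_sub (o x y : vec4) : vdot o (vsub x y) = vdot o x - vdot o y.
Proof. destruct o, x, y; unfold vdot, vsub; simpl; ring. Qed.

Definition nc_interface (ak : R) (Hnum : st -> st -> vec4) (Hcell : vec4)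
  (jg : st -> st -> R) (l r : st) : vec4 :=
  vscale (jg l r / 2) (vadd (vscale ak (Hnum l r)) (vscale (1 - ak) Hcell)).

Lemma ncterm_split (ak dx : R) (Hnum : st -> st -> vec4) (Hi : vec4)
  (jg : st -> st -> R) (um ui up : st) (o : vec4) :
  dx <> 0 ->
  vdot o (ncterm ak dx Hnum Hi jg um ui up)
  = / dx * (vdot o (nc_interface ak Hnum Hi jg ui up)
            + vdot o (nc_interface ak Hnum Hi jg um ui)).
Proof.
  intros Hdx; unfold ncterm, nc_interface.
  repeat rewrite ?vdot_add, ?vdot_scale.
  field; exact Hdx.
Qed.

Lemma nc_interface_no_jump (ak : R) (Hnum : st -> st -> vec4) (Hcell : vec4)
  (jg : st -> st -> R) (l r : st) (o : vec4) :
  jg l r = 0 -> vdot o (nc_interface ak Hnum Hcell jg l r) = 0.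
Proof.
  intros Hjump; unfold nc_interface; rewrite vdot_scale, Hjump; field.
Qed.

Section Fluctuations.

Variables g c a1 a2 a3 : R.

(* [s] is the cell whose exact H_k(s) enters the non-centred part. *)
Definition nc_sum (s l r : st) : vec4 :=
  vadd (nc_interface a1 (H1num g) (H1 g s) jg1 l r)
  (vadd (nc_interface a2 H2num (H2 s) jg2 l r)
  (vadd (nc_interface a3 (H3num c) (H3 c s) jg3 l r)
        (nc_interface a2 (H4num c) (H4 c s) jg4 l r))).

Definition left_fluct (l r : st) : vec4 := vadd (fnum g a1 a3 l r) (nc_sum l l r).

Definition right_fluct (l r : st) : vec4 :=
  vadd (vscale (-1) (fnum g a1 a3 l r)) (nc_sum r l r).

Lemma vdot_dtu_split (dx : R) (um ui up : st) (o : vec4) :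
  dx <> 0 ->
  vdot o (dtu g c a1 a2 a3 dx um ui up)
  = - (vdot o (left_fluct ui up) + vdot o (right_fluct um ui)) / dx.
Proof.
  intros Hdx; unfold dtu, left_fluct, right_fluct, nc_sum.
  repeat rewrite ?vdot_add, ?vdot_scale, ?vdot_sub, ?ncterm_split by exact Hdx.
  field; exact Hdx.
Qed.

Definition entropy_potential (s : st) : R := Fent g c s - vdot (omega g c s) (fphys g s).

Definition entropy_flux_num (l r : st) : R :=
  vdot (omega g c l) (left_fluct l r) + entropy_potential l.

(* The same numerical entropy flux is obtained from the right cell. *)
Lemma right_fluct_entropy (l r : st) :
  c <> 0 ->
  vdot (omega g c r) (right_fluct l r) = entropy_potential r - entropy_flux_num l r.
Proof.
  intros Hc; unfold entropy_flux_num, left_fluct, right_fluct, nc_sum, nc_interface,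
    entropy_potential.
  repeat rewrite ?vdot_add, ?vdot_scale.
  destruct l as [hl vl wl pl bl], r as [hr vr wr pr br].
  unfold fnum, fnum_h, omega, fphys, Fent, Uent, vdot,
    H1num, H2num, H3num, H4num, H1, H2, H3, H4, jg1, jg2, jg3, jg4, avg, jump.
  cbn [v1 v2 v3 v4 sh sv sw sp sb].
  field; exact Hc.
Qed.

Lemma fnum_consistent (s : st) : fnum g a1 a3 s s = fphys g s.
Proof.
  destruct s as [h v w p b].
  unfold fnum, fnum_h, fphys, avg; cbn [sh sv sw sp]; f_equal; field.
Qed.

Lemma left_fluct_consistent (s : st) (o : vec4) :
  vdot o (left_fluct s s) = vdot o (fphys g s).
Proof.
  assert (Hjump : forall x : R, jump x x = 0) by (intro x; unfold jump; ring).
  unfold left_fluct, nc_sum; rewrite !vdot_add, fnum_consistent.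
  rewrite !nc_interface_no_jump; try apply Hjump.
  ring.
Qed.

End Fluctuations.

Theorem mainTheorem9 (g c a1 a2 a3 : R) :
  0 < g -> 0 < c ->
  exists Fnum : st -> st -> R,
    (forall s : st, 0 < sh s -> Fnum s s = Fent g c s) /\
    (forall (dx : R) (u : Z -> st),
       0 < dx ->
       (forall i : Z, 0 < sh (u i)) ->
       forall i : Z,
         vdot (omega g c (u i))
              (dtu g c a1 a2 a3 dx (u (i - 1)%Z) (u i) (u (i + 1)%Z))
         = - (Fnum (u i) (u (i + 1)%Z) - Fnum (u (i - 1)%Z) (u i)) / dx).
Proof.
  intros _ Hc.
  exists (entropy_flux_num g c a1 a2 a3); split.
  - intros s _.
    unfold entropy_flux_num, entropy_potential.
    rewrite left_fluct_consistent; ring.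
  - intros dx u Hdx _ i.
    rewrite vdot_dtu_split, right_fluct_entropy by lra.
    unfold entropy_flux_num at 2; field; lra.
Qed.
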